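(* Let $f$ be a real-analytic function of one real variable that is not identically zero. Consider on $\mathbb R^2$ the system $\ddot x_1=\dot x_1^2\,f(\dot x_2/\dot x_1)$, $\ddot x_2=\dot x_1\dot x_2\,f(\dot x_2/\dot x_1)$, i.e. the spray with $f^1=y_1^2f(y_2/y_1)$, $f^2=y_1y_2f(y_2/y_1)$ on the region $y_1\neq0$. Then this system is not the geodesic system of any non-Berwald Landsberg metric: there is no open set $U$ (in the domain of the spray) on which the Berwald curvature $\mathcal R$ is not identically zero and a function $E:U\to\mathbb R$ satisfying (H), (EL), (Ls) with $(g_{ij})$ positive definite.
   Context: Coordinates $(x^1,x^2,y^1,y^2)=(x_1,x_2,y_1,y_2)$ on $T\mathbb R^2$. For the spray $S=y^i\frac{\partial}{\partial x^i}+f^i\frac{\partial}{\partial y^i}$: $\Gamma^i_j=-\frac12\frac{\partial f^i}{\partial y^j}$, $\Gamma^i_{jk}=\frac{\partial\Gamma^i_j}{\partial y^k}$; Berwald curvature $\mathcal R=-\frac12\frac{\partial^3f^l}{\partial y^i\partial y^j\partial y^k}dx^i\otimes dx^j\otimes dx^k\otimes\frac{\partial}{\partial y^l}$ (a Landsberg metric is of Berwald type iff $\mathcal R=0$). For $E$ smooth, $g_{ij}=\frac{\partial^2E}{\partial y^i\partial y^j}$; (H) $y^i\frac{\partial E}{\partial y^i}-2E=0$; (EL) $y^j\frac{\partial^2E}{\partial x^j\partial y^i}+f^j\frac{\partial^2E}{\partial y^j\partial y^i}-\frac{\partial E}{\partial x^i}=0$; (Ls) $\frac{\partial g_{jk}}{\partial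 x^i}-\Gamma^l_i\frac{\partial g_{jk}}{\partial y^l}-\Gamma^l_{ik}g_{lj}-\Gamma^l_{ij}g_{lk}=0$. *)

From Stdlib Require Import Reals Lra List.
From Coquelicot Require Import Coquelicot.
Open Scope R_scope.

Inductive I2 : Type := ix1 | ix2.

Definition sum2 (F : I2 -> R) : R := F ix1 + F ix2.

(** Coordinates on T R^2 = R^4 : x^1, x^2, y^1, y^2. *)
Inductive Coord : Type := X (i : I2) | Y (i : I2).

Definition Point := Coord -> R.

Definition upd (p : Point) (c : Coord) (t : R) : Point :=
  fun d => match c, d with
           | X ix1, X ix1 | X ix2, X ix2 | Y ix1, Y ix1 | Y ix2, Y ix2 => t
           | _, _ => p d
           end.

Definition pd (c : Coord) (F : Point -> R) : Point -> R :=
  fun p => Derive (fun t => F (upd p c t)) (p c).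

Definition pds (l : list Coord) (F : Point -> R) : Point -> R :=
  fold_right pd F l.

Definition open_pts (U : Point -> Prop) : Prop :=
  forall p, U p -> exists eps, 0 < eps /\
    forall q, (forall c, Rabs (q c - p c) < eps) -> U q.

Definition continuous_at_pt (F : Point -> R) (p : Point) : Prop :=
  forall eps, 0 < eps -> exists delta, 0 < delta /\
    forall q, (forall c, Rabs (q c - p c) < delta) -> Rabs (F q - F p) < eps.

Definition smooth_on (U : Point -> Prop) (F : Point -> R) : Prop :=
  forall (l : list Coord) (p : Point), U p ->
    continuous_at_pt (pds l F) p /\
    forall c, ex_derive (fun t => pds l F (upd p c t)) (p c).

Definition real_analytic (f : R -> R) : Prop :=
  forall x0, exists r (a : nat -> R), 0 < r /\
    forall x, Rabs (x - x0) < r ->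
      is_series (fun n => a n * (x - x0) ^ n) (f x).

Definition spray (f : R -> R) (i : I2) : Point -> R :=
  fun p => match i with
           | ix1 => p (Y ix1) ^ 2 * f (p (Y ix2) / p (Y ix1))
           | ix2 => p (Y ix1) * p (Y ix2) * f (p (Y ix2) / p (Y ix1))
           end.

Definition Gam1 (f : R -> R) (i j : I2) : Point -> R :=
  fun p => - / 2 * pd (Y j) (spray f i) p.

Definition Gam2 (f : R -> R) (i j k : I2) : Point -> R :=
  pd (Y k) (Gam1 f i j).

Definition berwald (f : R -> R) (i j k l : I2) : Point -> R :=
  fun p => - / 2 * pds (Y i :: Y j :: Y k :: nil) (spray f l) p.

Definition gmet (E : Point -> R) (i j : I2) : Point -> R :=
  pds (Y i :: Y j :: nil) E.

Definition cond_H (E : Point -> R) (p : Point) : Prop :=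
  sum2 (fun i => p (Y i) * pd (Y i) E p) - 2 * E p = 0.

Definition cond_EL (f : R -> R) (E : Point -> R) (p : Point) : Prop :=
  forall i : I2,
    sum2 (fun j => p (Y j) * pds (X j :: Y i :: nil) E p)
    + sum2 (fun j => spray f j p * pds (Y j :: Y i :: nil) E p)
    - pd (X i) E p = 0.

Definition cond_Ls (f : R -> R) (E : Point -> R) (p : Point) : Prop :=
  forall i j k : I2,
    pd (X i) (gmet E j k) p
    - sum2 (fun l => Gam1 f l i p * pd (Y l) (gmet E j k) p)
    - sum2 (fun l => Gam2 f l i k p * gmet E l j p)
    - sum2 (fun l => Gam2 f l i j p * gmet E l k p) = 0.

Definition posdef_g (E : Point -> R) (p : Point) : Prop :=
  forall v : I2 -> R, (v ix1 <> 0 \/ v ix2 <> 0) ->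
    0 < sum2 (fun j => sum2 (fun k => gmet E j k p * v j * v k)).

(* Write u = y2/y1.  Differentiating (H), (EL) and (Ls) and eliminating the
   x-derivatives of E gives f'''(u) E + 3/2 y1 f''(u) dE/dy2 = 0, i.e. the
   function Psi := f''(u)^2 E^3 does not depend on y2; the Euler-Lagrange
   equations also give y^i dPsi/dx^i = -6 y1 f(u) Psi.  On a line in the
   y2-direction Psi is constant, so the second identity makes f affine in u
   unless Psi = 0; and if f is affine then f'' = 0 and Psi = 0 anyway.  Since
   E > 0 by positive definiteness, f'' vanishes near every value of u taken in
   U, hence the spray is quadratic in y there and its Berwald curvature is
   zero. *)

From Stdlib Require Import Reals Lra List FunctionalExtensionality.
From Coquelicot Require Import Coquelicot.
Import ListNotations.
Open Scope R_scope.

(** * Calculus on T R^2 *)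

Definition Coord_eq_dec (c d : Coord) : {c = d} + {c <> d}.
Proof. decide equality; decide equality. Defined.

Lemma upd_same p c t : upd p c t c = t.
Proof. now destruct c as [[|]|[|]]. Qed.

Lemma upd_other p c d t : c <> d -> upd p c t d = p d.
Proof. intros Hcd; destruct c as [[|]|[|]], d as [[|]|[|]]; easy. Qed.

Lemma upd_id p c : upd p c (p c) = p.
Proof.
apply functional_extensionality; intros d.
now destruct c as [[|]|[|]], d as [[|]|[|]].
Qed.

Lemma upd_upd p c s t : upd (upd p c s) c t = upd p c t.
Proof.
apply functional_extensionality; intros d.
now destruct c as [[|]|[|]], d as [[|]|[|]].
Qed.

Lemma upd_comm p c d s t : c <> d -> upd (upd p c s) d t = upd (upd p d t) c s.
Proof.
intros Hcd; apply functional_extensionality; intros e.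
destruct c as [[|]|[|]], d as [[|]|[|]], e as [[|]|[|]]; easy.
Qed.

Definition is_pd (c : Coord) (F : Point -> R) (q : Point) (v : R) : Prop :=
  is_derive (fun t => F (upd q c t)) (q c) v.

Lemma is_pd_eq c F q v w : is_pd c F q v -> v = w -> is_pd c F q w.
Proof. now intros H <-. Qed.

Lemma is_pd_unique c F q v : is_pd c F q v -> pd c F q = v.
Proof. apply is_derive_unique. Qed.

Lemma is_pd_const c k q : is_pd c (fun _ => k) q 0.
Proof. apply (is_derive_const k (q c)). Qed.

Lemma is_pd_coord_same c q : is_pd c (fun r => r c) q 1.
Proof.
apply is_derive_ext with (fun t => t); [intros t; now rewrite upd_same|].
apply (is_derive_id (q c)).
Qed.

Lemma is_pd_coord_other c d q : c <> d -> is_pd c (fun r => r d) q 0.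
Proof.
intros Hcd; apply is_derive_ext with (fun _ => q d).
- intros t; now rewrite upd_other.
- apply (is_derive_const (q d) (q c)).
Qed.

Lemma is_pd_plus c F G q u v :
  is_pd c F q u -> is_pd c G q v -> is_pd c (fun r => F r + G r) q (u + v).
Proof. intros HF HG; apply (is_derive_plus _ _ _ _ _ HF HG). Qed.

Lemma is_pd_minus c F G q u v :
  is_pd c F q u -> is_pd c G q v -> is_pd c (fun r => F r - G r) q (u - v).
Proof. intros HF HG; apply (is_derive_minus _ _ _ _ _ HF HG). Qed.

Lemma is_pd_opp c F q u : is_pd c F q u -> is_pd c (fun r => - F r) q (- u).
Proof. intros HF; apply (is_derive_opp _ _ _ HF). Qed.

Lemma is_pd_mult c F G q u v : is_pd c F q u -> is_pd c G q v ->
  is_pd c (fun r => F r * G r) q (u * G q + F q * v).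
Proof.
intros HF HG; unfold is_pd.
replace (u * G q + F q * v) with (u * G (upd q c (q c)) + F (upd q c (q c)) * v)
  by now rewrite upd_id.
apply (is_derive_mult (fun t => F (upd q c t)) (fun t => G (upd q c t))); auto.
intros; apply Rmult_comm.
Qed.

Lemma is_pd_inv c F q u : is_pd c F q u -> F q <> 0 ->
  is_pd c (fun r => / F r) q (- u / F q ^ 2).
Proof.
intros HF HFq; unfold is_pd.
replace (- u / F q ^ 2) with (- u / F (upd q c (q c)) ^ 2) by now rewrite upd_id.
apply (is_derive_inv (fun t => F (upd q c t))); auto.
now rewrite upd_id.
Qed.

Lemma is_pd_div c F G q u v : is_pd c F q u -> is_pd c G q v -> G q <> 0 ->
  is_pd c (fun r => F r / G r) q ((u * G q - F q * v) / G q ^ 2).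
Proof.
intros HF HG HGq; eapply is_pd_eq.
- apply is_pd_mult; [exact HF | apply is_pd_inv; [exact HG | exact HGq]].
- cbv beta; field; exact HGq.
Qed.

Lemma is_pd_pow c F q u n : is_pd c F q u ->
  is_pd c (fun r => F r ^ n) q (INR n * F q ^ pred n * u).
Proof.
intros HF; induction n as [|n IH]; cbn [pow].
- eapply is_pd_eq; [apply (is_pd_const c 1 q) | simpl; ring].
- eapply is_pd_eq; [apply (is_pd_mult c F (fun r => F r ^ n) q u _ HF IH)|].
  rewrite S_INR; destruct n; simpl; ring.
Qed.

Lemma is_pd_comp (h h' : R -> R) c G q v :
  (forall x, is_derive h x (h' x)) -> is_pd c G q v ->
  is_pd c (fun r => h (G r)) q (h' (G q) * v).
Proof.
intros Hh HG; unfold is_pd.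
replace (h' (G q) * v) with (h' (G (upd q c (q c))) * v) by now rewrite upd_id.
eapply is_derive_ext; [intros t; reflexivity|].
eapply filterdiff_ext_lin.
- apply (is_derive_comp h (fun t => G (upd q c t))); [apply Hh | exact HG].
- intros y; cbn; unfold scal; cbn; unfold mult; cbn; ring.
Qed.

Definition axis_open (V : Point -> Prop) : Prop :=
  forall r, V r -> forall c, exists eps, 0 < eps /\
    forall t, Rabs (t - r c) < eps -> V (upd r c t).

Lemma open_pts_axis_open U : open_pts U -> axis_open U.
Proof.
intros HU r Hr c; destruct (HU r Hr) as [eps [Heps Hball]].
exists eps; split; [exact Heps|]; intros t Ht; apply Hball; intros d.
destruct (Coord_eq_dec c d) as [<-|Hcd].
- now rewrite upd_same.
- rewrite upd_other, Rminus_eq_0, Rabs_R0 by exact Hcd; exact Heps.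
Qed.

Lemma locally_ball (P : R -> Prop) x eps : 0 < eps ->
  (forall t, Rabs (t - x) < eps -> P t) -> locally x P.
Proof. intros Heps H; exists (mkposreal eps Heps); exact H. Qed.

Lemma axis_open_locally V r c (P : Point -> Prop) : axis_open V -> V r ->
  (forall s, V s -> P s) -> locally (r c) (fun t => P (upd r c t)).
Proof.
intros HV Hr HP; destruct (HV r Hr c) as [eps [Heps Hline]].
apply locally_ball with eps; auto.
Qed.

Lemma is_pd_ext_loc V c F G q v : axis_open V -> V q ->
  (forall r, V r -> F r = G r) -> is_pd c F q v -> is_pd c G q v.
Proof.
intros HV Hq HFG HF; eapply is_derive_ext_loc; [|exact HF].
apply (axis_open_locally V q c (fun s => F s = G s)); auto.
Qed.

Lemma is_pd_vanishing V c F q v : axis_open V -> V q ->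
  (forall r, V r -> F r = 0) -> is_pd c F q v -> v = 0.
Proof.
intros HV Hq HF Hv.
apply (is_pd_ext_loc V c F (fun _ => 0)) in Hv; auto.
rewrite <- (is_pd_unique _ _ _ _ Hv); apply is_pd_unique, is_pd_const.
Qed.

Lemma pd_ext_loc V c F G q : axis_open V -> V q ->
  (forall r, V r -> F r = G r) -> pd c F q = pd c G q.
Proof.
intros HV Hq HFG; apply Derive_ext_loc.
apply (axis_open_locally V q c (fun s => F s = G s)); auto.
Qed.

Lemma pds_ext_loc V F G l r : axis_open V -> (forall r, V r -> F r = G r) ->
  V r -> pds l F r = pds l G r.
Proof.
intros HV HFG; revert r; induction l as [|c l IH]; intros r Hr; simpl.
- now apply HFG.
- apply (pd_ext_loc V); auto.
Qed.

Lemma smooth_is_pd U E l c q : smooth_on U E -> U q ->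
  is_pd c (pds l E) q (pds (c :: l) E q).
Proof. intros HE Hq; apply Derive_correct, (proj2 (HE l q Hq) c). Qed.

Definition slice (q : Point) (a b : Coord) (u v : R) : Point := upd (upd q a u) b v.

Section Slice.
Variables (q : Point) (a b : Coord).
Hypothesis Hab : a <> b.

Lemma slice_fst u v : slice q a b u v a = u.
Proof. unfold slice; rewrite upd_other by congruence; apply upd_same. Qed.

Lemma slice_snd u v : slice q a b u v b = v.
Proof. apply upd_same. Qed.

Lemma slice_upd_fst u v s : upd (slice q a b u v) a s = slice q a b s v.
Proof. unfold slice; rewrite upd_comm by congruence; now rewrite upd_upd. Qed.

Lemma slice_upd_snd u v s : upd (slice q a b u v) b s = slice q a b u s.
Proof. apply upd_upd. Qed.

Lemma slice_center : slice q a b (q a) (q b) = q.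
Proof. unfold slice; now rewrite !upd_id. Qed.

Lemma slice_comm u v : slice q a b u v = slice q b a v u.
Proof. apply upd_comm; congruence. Qed.

Lemma slice_near eps u v : 0 < eps -> Rabs (u - q a) < eps -> Rabs (v - q b) < eps ->
  forall c, Rabs (slice q a b u v c - q c) < eps.
Proof.
intros Heps Hu Hv c; unfold slice.
destruct (Coord_eq_dec b c) as [<-|Hbc]; [now rewrite upd_same|].
rewrite upd_other by exact Hbc.
destruct (Coord_eq_dec a c) as [<-|Hac]; [now rewrite upd_same|].
rewrite upd_other, Rminus_eq_0, Rabs_R0 by exact Hac; exact Heps.
Qed.

Lemma Derive_slice_fst F u v :
  Derive (fun z => F (slice q a b z v)) u = pd a F (slice q a b u v).
Proof.
unfold pd; rewrite slice_fst; apply Derive_ext; intros s; now rewrite slice_upd_fst.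
Qed.

Lemma Derive_slice_snd F u v :
  Derive (fun t => F (slice q a b u t)) v = pd b F (slice q a b u v).
Proof.
unfold pd; rewrite slice_snd; apply Derive_ext; intros s; now rewrite slice_upd_snd.
Qed.

Lemma Derive2_slice F u v :
  Derive (fun z => Derive (fun t => F (slice q a b z t)) v) u
  = pd a (pd b F) (slice q a b u v).
Proof.
rewrite <- Derive_slice_fst; apply Derive_ext; intros z; apply Derive_slice_snd.
Qed.

Lemma continuity_2d_slice G : continuous_at_pt G q ->
  continuity_2d_pt (fun u v => G (slice q a b u v)) (q a) (q b).
Proof.
intros HG eps; destruct (HG eps (cond_pos eps)) as [d [Hd Hnear]].
exists (mkposreal d Hd); intros u v Hu Hv; cbn in Hu, Hv.
rewrite slice_center; apply Hnear, slice_near; auto.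
Qed.

End Slice.

Section Schwarz.
Variables (U : Point -> Prop) (E : Point -> R).
Hypotheses (HU : open_pts U) (HE : smooth_on U E).

Lemma ex_derive_pds_slice l q a b u v : a <> b -> U (slice q a b u v) ->
  ex_derive (fun z => pds l E (slice q a b z v)) u /\
  ex_derive (fun t => pds l E (slice q a b u t)) v.
Proof.
intros Hab Hr; destruct (HE l _ Hr) as [_ Hdiff]; split.
- eapply ex_derive_ext; [|specialize (Hdiff a); rewrite slice_fst in Hdiff by exact Hab;
    exact Hdiff].
  intros s; cbn; now rewrite slice_upd_fst.
- eapply ex_derive_ext; [|specialize (Hdiff b); rewrite slice_snd in Hdiff; exact Hdiff].
  intros s; cbn; now rewrite slice_upd_snd.
Qed.

Lemma pds_swap l a b q : U q -> pds (a :: b :: l) E q = pds (b :: a :: l) E q.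
Proof.
intros Hq; destruct (Coord_eq_dec a b) as [<-|Hab]; [reflexivity|].
assert (Hba : b <> a) by congruence.
set (g u v := pds l E (slice q a b u v)).
assert (Hab2 : forall u v, Derive (fun z => Derive (fun t => g z t) v) u
                 = pds (a :: b :: l) E (slice q a b u v))
  by (intros; apply Derive2_slice; exact Hab).
assert (Hba2 : forall u v, Derive (fun z => Derive (fun t => g t z) u) v
                 = pds (b :: a :: l) E (slice q a b u v)).
{ intros u v; rewrite (slice_comm q a b Hab); unfold g.
  change (pds (b :: a :: l) E) with (pd b (pd a (pds l E))).
  rewrite <- (Derive2_slice q b a Hba); apply Derive_ext; intros z; apply Derive_ext.
  intros t; now rewrite (slice_comm q a b Hab). }
rewrite <- (slice_center q a b) at 1 2; rewrite <- Hab2, <- Hba2.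
destruct (HU q Hq) as [eps [Heps Hball]].
apply Schwarz.
- exists (mkposreal eps Heps); intros u v Hu Hv.
  assert (Hr : U (slice q a b u v)) by (apply Hball, slice_near; auto).
  destruct (ex_derive_pds_slice l q a b u v Hab Hr) as [Hu' Hv'].
  destruct (ex_derive_pds_slice (b :: l) q a b u v Hab Hr) as [Hbu _].
  destruct (ex_derive_pds_slice (a :: l) q a b u v Hab Hr) as [_ Hav].
  repeat split; auto.
  + eapply ex_derive_ext; [|exact Hbu]; intros z; cbn; symmetry; apply Derive_slice_snd.
  + eapply ex_derive_ext; [|exact Hav]; intros z; cbn; symmetry; now apply Derive_slice_fst.
- eapply continuity_2d_pt_ext; [intros u v; symmetry; apply Hab2|].
  apply continuity_2d_slice, (HE (a :: b :: l) q Hq).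
- eapply continuity_2d_pt_ext; [intros u v; symmetry; apply Hba2|].
  apply continuity_2d_slice, (HE (b :: a :: l) q Hq).
Qed.

End Schwarz.

Definition in_box (p : Point) (eps : R) (q : Point) : Prop :=
  forall c, Rabs (q c - p c) < eps.

Lemma in_box_center p eps : 0 < eps -> in_box p eps p.
Proof. intros Heps c; now rewrite Rminus_eq_0, Rabs_R0. Qed.

Lemma in_box_upd p eps q d t :
  in_box p eps q -> Rabs (t - p d) < eps -> in_box p eps (upd q d t).
Proof.
intros Hq Ht c; destruct (Coord_eq_dec d c) as [<-|Hdc].
- now rewrite upd_same.
- rewrite upd_other by exact Hdc; apply Hq.
Qed.

Lemma is_pd_is_derive c F q v :
  is_pd c F q v -> is_derive (fun t => F (upd q c t)) (q c) v.
Proof. easy. Qed.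

(* Keeps [apply] from unfolding [is_derive] while the rules below are tried. *)
#[global] Opaque is_pd.

Ltac pd_rule :=
  first [ apply is_pd_const | apply is_pd_coord_same
        | apply is_pd_coord_other; discriminate
        | apply is_pd_plus | apply is_pd_minus | apply is_pd_opp
        | apply is_pd_div | apply is_pd_pow | apply is_pd_mult ].


(** * Real functions of one variable *)

Definition locally_pseries (h : R -> R) : Prop := forall x0, exists (a : nat -> R) (r : R),
  0 < r /\ Rbar_le r (CV_radius a) /\
  forall x, Rabs (x - x0) < r -> h x = PSeries a (x - x0).

Lemma real_analytic_locally_pseries h : real_analytic h -> locally_pseries h.
Proof.
intros Hh x0; destruct (Hh x0) as [r [a [Hr Hsum]]].
exists a, r; split; [exact Hr | split].
- assert (Hbounded : forall s, 0 <= s < r -> Rbar_le s (CV_radius a)).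
  { intros s Hs; apply (proj1 (CV_radius_bounded a)).
    assert (Hs' : is_series (fun n => a n * s ^ n) (h (x0 + s))).
    { replace (fun n => a n * s ^ n) with (fun n => a n * (x0 + s - x0) ^ n)
        by (apply functional_extensionality; intros n; do 2 f_equal; ring).
      apply Hsum; replace (x0 + s - x0) with s by ring; rewrite Rabs_pos_eq; lra. }
    destruct (filterlim_bounded (fun n => a n * s ^ n)) as [M HM].
    { exists 0; apply ex_series_lim_0; eexists; exact Hs'. }
    exists M; exact HM. }
  pose proof (CV_radius_ge_0 a) as Hpos.
  destruct (CV_radius a) as [rho| |]; cbn in *; auto.
  destruct (Rle_or_lt r rho) as [Hle|Hlt]; [exact Hle|].
  specialize (Hbounded ((rho + r) / 2)); cbn in Hbounded; lra.
- intros x Hx; symmetry; apply is_series_unique, Hsum, Hx.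
Qed.

Lemma locally_pseries_is_derive h x0 a (r : R) x : Rbar_le r (CV_radius a) ->
  (forall x, Rabs (x - x0) < r -> h x = PSeries a (x - x0)) ->
  Rabs (x - x0) < r -> is_derive h x (PSeries (PS_derive a) (x - x0)).
Proof.
intros Hrad Heq Hx.
apply is_derive_ext_loc with (fun y => PSeries a (y - x0)).
- apply locally_ball with (r - Rabs (x - x0)); [lra|].
  intros y Hy; symmetry; apply Heq.
  replace (y - x0) with ((y - x) + (x - x0)) by ring.
  eapply Rle_lt_trans; [apply Rabs_triang | lra].
- assert (Hin : Rbar_lt (Rabs (x - x0)) (CV_radius a))
    by (eapply Rbar_lt_le_trans; [|exact Hrad]; exact Hx).
  eapply is_derive_ext; [intros y; reflexivity|].
  replace (PSeries (PS_derive a) (x - x0)) with (scal 1 (PSeries (PS_derive a) (x - x0)))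
    by (unfold scal; cbn; unfold mult; cbn; ring).
  apply (is_derive_comp (PSeries a) (fun y => y - x0)).
  + now apply is_derive_PSeries.
  + auto_derive; [easy | ring].
Qed.

Lemma locally_pseries_derive h : locally_pseries h ->
  (forall x, is_derive h x (Derive h x)) /\ locally_pseries (Derive h).
Proof.
intros Hh; split.
- intros x; destruct (Hh x) as [a [r [Hr [Hrad Heq]]]].
  apply Derive_correct; eexists; apply (locally_pseries_is_derive h x a r x Hrad Heq).
  rewrite Rminus_eq_0, Rabs_R0; exact Hr.
- intros x0; destruct (Hh x0) as [a [r [Hr [Hrad Heq]]]].
  exists (PS_derive a), r; split; [exact Hr | split].
  + now rewrite CV_radius_derive.
  + intros x Hx; apply is_derive_unique, (locally_pseries_is_derive h x0 a r x Hrad Heq Hx).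
Qed.

Lemma derive_zero_const (g g' : R -> R) x0 eta : 0 < eta ->
  (forall w, Rabs (w - x0) < eta -> is_derive g w (g' w)) ->
  (forall w, Rabs (w - x0) < eta -> g' w = 0) ->
  forall w, Rabs (w - x0) <= eta / 2 -> g w = g x0.
Proof.
intros Heta Hd Hz w Hw.
destruct (MVT_cor4 g g' x0 (eta / 2)) with (b := w) as [c [Hc1 Hc2]];
  [intros c Hc; apply Hd; lra | exact Hw|].
rewrite Hz in Hc1 by lra; lra.
Qed.

Lemma Rabs_scale_lt a w u eps : a <> 0 -> Rabs (w - u) < eps / Rabs a ->
  Rabs (a * w - a * u) < eps.
Proof.
intros Ha Hw; rewrite <- Rmult_minus_distr_l, Rabs_mult.
apply Rabs_pos_lt in Ha; apply (Rmult_lt_compat_l (Rabs a)) in Hw; [|exact Ha].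
replace (Rabs a * (eps / Rabs a)) with eps in Hw by (field; lra); exact Hw.
Qed.

Lemma continuity_pt_near g x u0 eta : continuity_pt g x -> Rabs (g x - u0) < eta ->
  exists d, 0 < d /\ forall t, Rabs (t - x) < d -> Rabs (g t - u0) < eta.
Proof.
intros Hg Hx; destruct (Hg (eta - Rabs (g x - u0))) as [d [Hd Hnear]]; [lra|].
exists d; split; [exact Hd|]; intros t Ht.
replace (g t - u0) with ((g t - g x) + (g x - u0)) by ring.
eapply Rle_lt_trans; [apply Rabs_triang|].
destruct (Req_dec t x) as [->|Htx]; [rewrite Rminus_eq_0, Rabs_R0; lra|].
enough (Rabs (g t - g x) < eta - Rabs (g x - u0)) by lra.
apply (Hnear t); split; [split; [exact I | congruence] | exact Ht].
Qed.

Section SecondDerivative.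
Variables (g g' g'' : R -> R).
Hypotheses (Dg : forall x, is_derive g x (g' x)) (Dg' : forall x, is_derive g' x (g'' x)).

Lemma affine_of_second_derive_zero x0 eta : 0 < eta ->
  (forall w, Rabs (w - x0) < eta -> g'' w = 0) ->
  forall w, Rabs (w - x0) <= eta / 4 -> g w = g x0 + g' x0 * (w - x0).
Proof.
intros Heta Hz.
assert (Hslope : forall w, Rabs (w - x0) <= eta / 2 -> g' w = g' x0)
  by (apply (derive_zero_const g' g''); auto).
assert (Hline : forall w, Rabs (w - x0) <= (eta / 2) / 2 ->
          g w - g' x0 * w = g x0 - g' x0 * x0).
{ apply (derive_zero_const (fun w => g w - g' x0 * w) (fun w => g' w - g' x0)); [lra| |].
  - intros w _; apply @is_derive_minus; [apply Dg|].
    eapply is_derive_ext; [intros t; reflexivity|].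
    replace (g' x0) with (g' x0 * 1) at 2 by ring.
    apply is_derive_scal, (is_derive_id w).
  - intros w Hw; rewrite Hslope; [ring | lra]. }
intros w Hw; specialize (Hline w); lra.
Qed.

Lemma second_derive_zero_of_affine x0 eta A B : 0 < eta ->
  (forall w, Rabs (w - x0) < eta -> g w = A + B * w) -> g'' x0 = 0.
Proof.
intros Heta Haff.
assert (Hslope : forall w, Rabs (w - x0) < eta -> g' w = B).
{ intros w Hw; rewrite <- (is_derive_unique g w (g' w) (Dg w)).
  apply is_derive_unique, is_derive_ext_loc with (fun x => A + B * x).
  - apply locally_ball with (eta - Rabs (w - x0)); [lra|].
    intros t Ht; symmetry; apply Haff.
    replace (t - x0) with ((t - w) + (w - x0)) by ring.
    eapply Rle_lt_trans; [apply Rabs_triang | lra].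
  - auto_derive; [easy | ring]. }
rewrite <- (is_derive_unique g' x0 (g'' x0) (Dg' x0)).
apply is_derive_unique, is_derive_ext_loc with (fun _ => B).
- apply locally_ball with eta; [exact Heta|]; intros t Ht; symmetry; apply Hslope, Ht.
- apply (is_derive_const B x0).
Qed.

End SecondDerivative.

(** * The spray and its connection *)

Definition y1_nonzero (r : Point) : Prop := r (Y ix1) <> 0.

Lemma axis_open_y1_nonzero : axis_open y1_nonzero.
Proof.
intros r Hr c; exists (Rabs (r (Y ix1))); split; [now apply Rabs_pos_lt|].
intros t Ht; unfold y1_nonzero.
destruct (Coord_eq_dec c (Y ix1)) as [->|Hc].
- rewrite upd_same; intros ->; rewrite Rabs_minus_sym, Rminus_0_r in Ht; lra.
- now rewrite upd_other.
Qed.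

Section Spray.
Variables (f f' f'' : R -> R).
Hypotheses (Df : forall x, is_derive f x (f' x)) (Df' : forall x, is_derive f' x (f'' x)).

Ltac pd_auto := repeat first [ pd_rule | assumption
  | apply (is_pd_comp f f'); [exact Df|] | apply (is_pd_comp f' f''); [exact Df'|] ].

Definition spray_dy (i j : I2) (r : Point) : R :=
  let a := r (Y ix1) in let b := r (Y ix2) in let u := b / a in
  match i, j with
  | ix1, ix1 => 2 * a * f u - b * f' u
  | ix1, ix2 => a * f' u
  | ix2, ix1 => b * f u - b ^ 2 / a * f' u
  | ix2, ix2 => a * f u + b * f' u
  end.

Definition spray_dyy (i j k : I2) (r : Point) : R :=
  let a := r (Y ix1) in let b := r (Y ix2) in let u := b / a in
  match i, j, k with
  | ix1, ix1, ix1 => 2 * f u - 2 * (b / a) * f' u + (b ^ 2 / a ^ 2) * f'' u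
  | ix1, ix1, ix2 | ix1, ix2, ix1 => f' u - b / a * f'' u
  | ix1, ix2, ix2 => f'' u
  | ix2, ix1, ix1 => b ^ 3 / a ^ 3 * f'' u
  | ix2, ix1, ix2 | ix2, ix2, ix1 => f u - b / a * f' u - b ^ 2 / a ^ 2 * f'' u
  | ix2, ix2, ix2 => 2 * f' u + b / a * f'' u
  end.

Lemma spray_is_pd i j r : y1_nonzero r -> is_pd (Y j) (spray f i) r (spray_dy i j r).
Proof.
intros Hr; unfold y1_nonzero, spray, spray_dy in *.
destruct i, j; (eapply is_pd_eq; [pd_auto|]); cbn [INR pred]; field; exact Hr.
Qed.

Lemma spray_dy_is_pd i j k r : y1_nonzero r ->
  is_pd (Y k) (spray_dy i j) r (spray_dyy i j k r).
Proof.
intros Hr; unfold y1_nonzero in Hr.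
destruct i, j, k; cbv beta iota zeta delta [spray_dy spray_dyy];
  (eapply is_pd_eq; [pd_auto|]); cbn [INR pred]; field; exact Hr.
Qed.

Lemma Gam1_eq i j r : y1_nonzero r -> Gam1 f i j r = - / 2 * spray_dy i j r.
Proof. intros Hr; unfold Gam1; f_equal; now apply is_pd_unique, spray_is_pd. Qed.

Lemma Gam2_eq i j k r : y1_nonzero r -> Gam2 f i j k r = - / 2 * spray_dyy i j k r.
Proof.
intros Hr; apply is_pd_unique.
apply (is_pd_ext_loc y1_nonzero _ (fun s => - / 2 * spray_dy i j s));
  [apply axis_open_y1_nonzero | exact Hr | intros s Hs; symmetry; now apply Gam1_eq|].
eapply is_pd_eq; [apply is_pd_mult; [apply is_pd_const | now apply spray_dy_is_pd]|].
cbn beta; ring.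
Qed.

End Spray.

(** * Consequences of (H), (EL) and (Ls) *)

Definition ratio (r : Point) : R := r (Y ix2) / r (Y ix1).

Lemma y2_near_of_ratio_near p eps w : p (Y ix1) <> 0 ->
  Rabs (w - ratio p) < eps / Rabs (p (Y ix1)) -> Rabs (p (Y ix1) * w - p (Y ix2)) < eps.
Proof.
intros Hy1 Hw; replace (p (Y ix2)) with (p (Y ix1) * ratio p) by (unfold ratio; now field).
now apply Rabs_scale_lt.
Qed.

Section Landsberg.
Variables (f f' f'' f''' : R -> R).
Hypotheses (Df : forall x, is_derive f x (f' x)) (Df' : forall x, is_derive f' x (f'' x))
  (Df'' : forall x, is_derive f'' x (f''' x)).
Variables (U : Point -> Prop) (E : Point -> R).
Hypotheses (HU : open_pts U) (HUy1 : forall r, U r -> r (Y ix1) <> 0)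
  (HE : smooth_on U E)
  (Hcond : forall r, U r ->
     cond_H E r /\ cond_EL f E r /\ cond_Ls f E r /\ posdef_g E r).

Lemma E_is_pd c l q : U q -> is_pd c (pds l E) q (pds (c :: l) E q).
Proof. now apply smooth_is_pd. Qed.

Ltac pd_auto := repeat first [ apply (spray_is_pd f f' Df); apply HUy1; assumption
  | pd_rule | apply E_is_pd; assumption | apply (E_is_pd _ []); assumption
  | apply HUy1; assumption
  | apply (is_pd_comp f f'); [exact Df|] | apply (is_pd_comp f' f''); [exact Df'|]
  | apply (is_pd_comp f'' f'''); [exact Df''|] ].

Lemma vanishing_pd c F q v w : U q -> (forall r, U r -> F r = 0) ->
  is_pd c F q v -> v = w -> w = 0.
Proof. intros Hq HF Hv <-; apply (is_pd_vanishing U c F q); auto using open_pts_axis_open. Qed.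

Lemma E_pds_swap l a b q : U q -> pds (a :: b :: l) E q = pds (b :: a :: l) E q.
Proof. now apply pds_swap. Qed.

Lemma E_pd_pds_swap c l a b q : U q ->
  pds (c :: a :: b :: l) E q = pds (c :: b :: a :: l) E q.
Proof.
intros Hq; apply (pd_ext_loc U); [now apply open_pts_axis_open | exact Hq|].
intros r Hr; now apply E_pds_swap.
Qed.

Definition euler_defect (r : Point) : R :=
  r (Y ix1) * pds [Y ix1] E r + r (Y ix2) * pds [Y ix2] E r - 2 * E r.

Lemma euler_defect_zero q : U q -> euler_defect q = 0.
Proof. intros Hq; apply (Hcond q Hq). Qed.

Lemma euler_dy j q : U q ->
  q (Y ix1) * pds [Y j; Y ix1] E q + q (Y ix2) * pds [Y j; Y ix2] E q
  - pds [Y j] E q = 0.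
Proof.
intros Hq; destruct j;
  [ eapply (vanishing_pd (Y ix1) euler_defect q _ _ Hq euler_defect_zero)
  | eapply (vanishing_pd (Y ix2) euler_defect q _ _ Hq euler_defect_zero) ];
  unfold euler_defect; first [solve [pd_auto] | cbn beta; ring].
Qed.

Lemma euler_dx i q : U q ->
  q (Y ix1) * pds [X i; Y ix1] E q + q (Y ix2) * pds [X i; Y ix2] E q
  - 2 * pds [X i] E q = 0.
Proof.
intros Hq; eapply (vanishing_pd (X i) euler_defect q _ _ Hq euler_defect_zero);
  unfold euler_defect; [pd_auto | cbn beta; ring].
Qed.

Lemma euler_dy22 q : U q ->
  q (Y ix1) * pds [Y ix1; Y ix2; Y ix2] E q + q (Y ix2) * pds [Y ix2; Y ix2; Y ix2] E q = 0.
Proof.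
intros Hq.
rewrite <- (E_pds_swap [Y ix2] (Y ix2) (Y ix1) q Hq),
  <- (E_pd_pds_swap (Y ix2) [] (Y ix2) (Y ix1) q Hq).
eapply (vanishing_pd (Y ix2) (fun r => r (Y ix1) * pds [Y ix2; Y ix1] E r
  + r (Y ix2) * pds [Y ix2; Y ix2] E r - pds [Y ix2] E r) q _ _ Hq);
  [intros r Hr; exact (euler_dy ix2 r Hr) | pd_auto | cbn beta; ring].
Qed.

Lemma E_pos r : U r -> 0 < E r.
Proof.
intros Hr; destruct (Hcond r Hr) as [_ [_ [_ Hpos]]].
specialize (Hpos (fun i => r (Y i)) (or_introl (HUy1 r Hr))).
pose proof (euler_dy ix1 r Hr) as Eu1; pose proof (euler_dy ix2 r Hr) as Eu2.
pose proof (euler_defect_zero r Hr) as Eu; unfold euler_defect in Eu.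
unfold sum2, gmet in Hpos; cbv beta in Hpos.
(* g(y, y) = 2 E by Euler's relation for the 2-homogeneous E *)
apply (f_equal (Rmult (r (Y ix1)))) in Eu1; apply (f_equal (Rmult (r (Y ix2)))) in Eu2.
nra.
Qed.

Definition el_defect (i : I2) (r : Point) : R :=
  r (Y ix1) * pds [X ix1; Y i] E r + r (Y ix2) * pds [X ix2; Y i] E r
  + (spray f ix1 r * pds [Y ix1; Y i] E r + spray f ix2 r * pds [Y ix2; Y i] E r)
  - pds [X i] E r.

Lemma el_defect_zero i q : U q -> el_defect i q = 0.
Proof. intros Hq; apply (Hcond q Hq). Qed.

Lemma el2_dy1 q : U q ->
  pds [X ix1; Y ix2] E q
  + q (Y ix1) * pds [Y ix1; X ix1; Y ix2] E q + q (Y ix2) * pds [Y ix1; X ix2; Y ix2] E q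
  + (spray_dy f f' ix1 ix1 q * pds [Y ix1; Y ix2] E q
     + spray f ix1 q * pds [Y ix1; Y ix1; Y ix2] E q
     + (spray_dy f f' ix2 ix1 q * pds [Y ix2; Y ix2] E q
        + spray f ix2 q * pds [Y ix1; Y ix2; Y ix2] E q))
  - pds [Y ix1; X ix2] E q = 0.
Proof.
intros Hq; eapply (vanishing_pd (Y ix1) (el_defect ix2) q _ _ Hq (el_defect_zero ix2));
  unfold el_defect; [pd_auto | cbn beta; ring].
Qed.

Lemma landsberg_eq i j k q : U q ->
  pds [X i; Y j; Y k] E q =
    sum2 (fun l => - / 2 * spray_dy f f' l i q * pds [Y l; Y j; Y k] E q)
  + sum2 (fun l => - / 2 * spray_dyy f f' f'' l i k q * pds [Y l; Y j] E q)
  + sum2 (fun l => - / 2 * spray_dyy f f' f'' l i j q * pds [Y l; Y k] E q).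
Proof.
intros Hq; destruct (Hcond q Hq) as [_ [_ [HLs _]]]; specialize (HLs i j k).
unfold sum2, gmet in *.
rewrite !(Gam1_eq f f' Df), !(Gam2_eq f f' f'' Df Df') in HLs by exact (HUy1 q Hq).
change (pd ?c (pds ?l E) q) with (pds (c :: l) E q) in HLs.
lra.
Qed.

Lemma dx2_E q : U q ->
  pds [X ix2] E q
  = - (f' (ratio q) * E q + / 2 * q (Y ix1) * f (ratio q) * pds [Y ix2] E q).
Proof.
intros Hq; assert (Hy1 := HUy1 q Hq).
pose proof (el_defect_zero ix2 q Hq) as EL2; unfold el_defect in EL2.
pose proof (el2_dy1 q Hq) as EL2y.
pose proof (euler_dx ix2 q Hq) as Eux2.
pose proof (euler_dy ix1 q Hq) as Eu1; pose proof (euler_dy ix2 q Hq) as Eu2.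
pose proof (euler_defect_zero q Hq) as Eu; unfold euler_defect in Eu.
rewrite (E_pds_swap [Y ix2] (Y ix1) (X ix1) q Hq), (E_pds_swap [Y ix2] (Y ix1) (X ix2) q Hq),
  (E_pds_swap [] (Y ix1) (X ix2) q Hq) in EL2y.
rewrite (E_pds_swap [] (Y ix2) (Y ix1) q Hq) in Eu2.
(* Solve (EL) and its y1-derivative for the x-derivatives, substitute them and (Ls) into
   the x2-derivative of (H), and express E and dE/dy by Euler's relations. *)
assert (eX : pds [X ix2] E q = q (Y ix1) * pds [X ix1; Y ix2] E q
   + q (Y ix2) * pds [X ix2; Y ix2] E q
   + (spray f ix1 q * pds [Y ix1; Y ix2] E q + spray f ix2 q * pds [Y ix2; Y ix2] E q))
  by lra.
assert (eXy : pds [X ix2; Y ix1] E q = pds [X ix1; Y ix2] E q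
  + q (Y ix1) * pds [X ix1; Y ix1; Y ix2] E q + q (Y ix2) * pds [X ix2; Y ix1; Y ix2] E q
  + (spray_dy f f' ix1 ix1 q * pds [Y ix1; Y ix2] E q
     + spray f ix1 q * pds [Y ix1; Y ix1; Y ix2] E q
     + (spray_dy f f' ix2 ix1 q * pds [Y ix2; Y ix2] E q
        + spray f ix2 q * pds [Y ix1; Y ix2; Y ix2] E q))) by lra.
assert (eE1 : pds [Y ix1] E q
  = q (Y ix1) * pds [Y ix1; Y ix1] E q + q (Y ix2) * pds [Y ix1; Y ix2] E q) by lra.
assert (eE2 : pds [Y ix2] E q
  = q (Y ix1) * pds [Y ix1; Y ix2] E q + q (Y ix2) * pds [Y ix2; Y ix2] E q) by lra.
assert (eE : E q = / 2 * (q (Y ix1) * pds [Y ix1] E q + q (Y ix2) * pds [Y ix2] E q)) by lra.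
rewrite eX in Eux2 |- *; rewrite eXy in Eux2.
rewrite (landsberg_eq ix1 ix1 ix2 q Hq), (landsberg_eq ix2 ix1 ix2 q Hq) in Eux2.
unfold sum2 in Eux2.
rewrite (E_pds_swap [Y ix2] (Y ix2) (Y ix1) q Hq), (E_pds_swap [] (Y ix2) (Y ix1) q Hq) in Eux2.
rewrite eE, eE1, eE2; unfold ratio.
match type of Eux2 with ?W = 0 => match goal with |- ?L = ?R =>
  assert (Hid : (L - R) + W = 0)
    by (cbv beta iota zeta delta [spray_dy spray_dyy spray]; field; exact Hy1)
end end.
lra.
Qed.

Definition dx2_E_defect (r : Point) : R :=
  pds [X ix2] E r + (f' (ratio r) * E r + / 2 * r (Y ix1) * f (ratio r) * pds [Y ix2] E r).

Definition dy2_dx2_E_defect (r : Point) : R :=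
  pds [Y ix2; X ix2] E r
  + (f'' (ratio r) * / r (Y ix1) * E r + f' (ratio r) * pds [Y ix2] E r
     + / 2 * (f' (ratio r) * pds [Y ix2] E r
              + r (Y ix1) * f (ratio r) * pds [Y ix2; Y ix2] E r)).

Lemma dy2_dx2_E_defect_zero r : U r -> dy2_dx2_E_defect r = 0.
Proof.
intros Hr; assert (Hy1 := HUy1 r Hr).
eapply (vanishing_pd (Y ix2) dx2_E_defect r _ _ Hr).
- intros s Hs; unfold dx2_E_defect; rewrite (dx2_E s Hs); ring.
- unfold dx2_E_defect, ratio; pd_auto.
- unfold dy2_dx2_E_defect, ratio; cbv beta; field; exact Hy1.
Qed.

Lemma landsberg_ode q : U q ->
  f''' (ratio q) * E q + 3 / 2 * q (Y ix1) * f'' (ratio q) * pds [Y ix2] E q = 0.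
Proof.
intros Hq; assert (Hy1 := HUy1 q Hq).
eassert (Hw : is_pd (Y ix2) dy2_dx2_E_defect q _)
  by (unfold dy2_dx2_E_defect, ratio; pd_auto).
apply (is_pd_vanishing U (Y ix2) _ q _ (open_pts_axis_open U HU) Hq
  dy2_dx2_E_defect_zero) in Hw; cbv beta in Hw.
rewrite (E_pd_pds_swap (Y ix2) [] (Y ix2) (X ix2) q Hq),
  (E_pds_swap [Y ix2] (Y ix2) (X ix2) q Hq), (landsberg_eq ix2 ix2 ix2 q Hq) in Hw.
unfold sum2 in Hw.
assert (eE122 : pds [Y ix1; Y ix2; Y ix2] E q
   = - (q (Y ix2) / q (Y ix1)) * pds [Y ix2; Y ix2; Y ix2] E q).
{ pose proof (euler_dy22 q Hq) as Eu22.
  apply (Rmult_eq_reg_l (q (Y ix1))); [|exact Hy1].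
  field_simplify; [lra | exact Hy1]. }
pose proof (euler_dy ix2 q Hq) as Eu2; rewrite (E_pds_swap [] (Y ix2) (Y ix1) q Hq) in Eu2.
assert (eE2 : pds [Y ix2] E q
  = q (Y ix1) * pds [Y ix1; Y ix2] E q + q (Y ix2) * pds [Y ix2; Y ix2] E q) by lra.
rewrite eE122 in Hw; rewrite eE2 in Hw |- *; unfold ratio.
match type of Hw with ?W = 0 => match goal with |- ?L = 0 =>
  assert (Hid : L = q (Y ix1) ^ 2 * W)
    by (cbv beta iota zeta delta [spray_dy spray_dyy spray]; field; exact Hy1)
end end.
rewrite Hid, Hw; ring.
Qed.

Definition Psi (r : Point) : R := f'' (ratio r) ^ 2 * E r ^ 3.

Lemma Psi_dy2 r : U r -> is_pd (Y ix2) Psi r 0.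
Proof.
intros Hr; assert (Hy1 := HUy1 r Hr); pose proof (landsberg_ode r Hr) as Hode.
eapply is_pd_eq; [unfold Psi, ratio; pd_auto|]; unfold ratio in Hode; cbn [INR pred].
match type of Hode with ?W = 0 =>
  transitivity (2 * f'' (r (Y ix2) / r (Y ix1)) * E r ^ 2 / r (Y ix1) * W) end.
- field; exact Hy1.
- rewrite Hode; ring.
Qed.

Lemma spray_dx_E q : U q ->
  q (Y ix1) * pds [X ix1] E q + q (Y ix2) * pds [X ix2] E q
  = -2 * q (Y ix1) * f (ratio q) * E q.
Proof.
intros Hq.
pose proof (el_defect_zero ix1 q Hq) as EL1; pose proof (el_defect_zero ix2 q Hq) as EL2.
pose proof (euler_dx ix1 q Hq) as Eux1; pose proof (euler_dx ix2 q Hq) as Eux2.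
pose proof (euler_dy ix1 q Hq) as Eu1; pose proof (euler_dy ix2 q Hq) as Eu2.
pose proof (euler_defect_zero q Hq) as Eu.
unfold el_defect, euler_defect, spray, ratio in *.
set (a := q (Y ix1)) in *; set (b := q (Y ix2)) in *; set (fu := f (b / a)) in *.
apply (f_equal (Rmult a)) in EL1, Eux1; apply (f_equal (Rmult b)) in EL2, Eux2.
apply (f_equal (Rmult (a ^ 2 * fu))) in Eu1; apply (f_equal (Rmult (a * b * fu))) in Eu2.
apply (f_equal (Rmult (a * fu))) in Eu.
nra.
Qed.

Lemma Psi_dx q : U q ->
  q (Y ix1) * pd (X ix1) Psi q + q (Y ix2) * pd (X ix2) Psi q
  = -6 * q (Y ix1) * f (ratio q) * Psi q.
Proof.
intros Hq; assert (Hy1 := HUy1 q Hq).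
eassert (Hx1 : is_pd (X ix1) Psi q _) by (unfold Psi, ratio; pd_auto).
eassert (Hx2 : is_pd (X ix2) Psi q _) by (unfold Psi, ratio; pd_auto).
rewrite (is_pd_unique _ _ _ _ Hx1), (is_pd_unique _ _ _ _ Hx2).
transitivity (3 * f'' (ratio q) ^ 2 * E q ^ 2 *
  (q (Y ix1) * pds [X ix1] E q + q (Y ix2) * pds [X ix2] E q)).
- unfold ratio; cbn [INR pred]; field; exact Hy1.
- rewrite (spray_dx_E q Hq); unfold Psi; ring.
Qed.

Section Box.
Variables (p : Point) (eps : R).
Hypotheses (Heps : 0 < eps) (Hbox : forall q, in_box p eps q -> U q).

Lemma Psi_y2_invariant q : in_box p eps q -> Psi q = Psi (upd q (Y ix2) (p (Y ix2))).
Proof.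
intros Hq.
destruct (MVT_cor4 (fun t => Psi (upd q (Y ix2) t)) (fun _ => 0) (p (Y ix2))
  (Rabs (q (Y ix2) - p (Y ix2)))) with (b := q (Y ix2)) as [c [Hc _]];
  [| apply Rle_refl | rewrite upd_id in Hc; lra].
intros t Ht.
assert (Hr : U (upd q (Y ix2) t))
  by (apply Hbox, in_box_upd; [exact Hq | eapply Rle_lt_trans; [exact Ht | apply Hq]]).
pose proof (is_pd_is_derive _ _ _ _ (Psi_dy2 _ Hr)) as Hd; rewrite upd_same in Hd.
eapply is_derive_ext; [|exact Hd]; intros s; cbn; now rewrite upd_upd.
Qed.

Lemma pd_X_Psi_y2_invariant i t : Rabs (t - p (Y ix2)) < eps ->
  pd (X i) Psi (upd p (Y ix2) t) = pd (X i) Psi p.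
Proof.
intros Ht; unfold pd; rewrite upd_other by discriminate.
apply Derive_ext_loc, (locally_ball _ _ eps Heps); intros s Hs.
rewrite Psi_y2_invariant.
- f_equal; apply functional_extensionality; intros d; now destruct d as [[|]|[|]], i.
- apply in_box_upd; [apply in_box_upd; [apply in_box_center, Heps | exact Ht] | exact Hs].
Qed.

Lemma Psi_line t : Rabs (t - p (Y ix2)) < eps ->
  p (Y ix1) * pd (X ix1) Psi p + t * pd (X ix2) Psi p
  = -6 * p (Y ix1) * f (t / p (Y ix1)) * Psi p.
Proof.
intros Ht.
assert (Hr : in_box p eps (upd p (Y ix2) t))
  by (apply in_box_upd; [apply in_box_center, Heps | exact Ht]).
pose proof (Psi_dx _ (Hbox _ Hr)) as Hdx.
rewrite !pd_X_Psi_y2_invariant, (Psi_y2_invariant _ Hr), upd_upd, upd_id in Hdx by exact Ht.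
unfold ratio in Hdx; rewrite upd_same, upd_other in Hdx by discriminate; exact Hdx.
Qed.

End Box.

Lemma Psi_zero p : U p -> Psi p = 0.
Proof.
intros Hp; assert (Hy1 := HUy1 p Hp); destruct (HU p Hp) as [eps [Heps Hbox]].
destruct (Req_dec (Psi p) 0) as [H0|HPsi]; [exact H0|].
(* otherwise Psi_line makes f affine near ratio p *)
assert (Hf''0 : f'' (ratio p) = 0).
{ apply (second_derive_zero_of_affine f f' f'' Df Df' (ratio p) (eps / Rabs (p (Y ix1)))
     (- pd (X ix1) Psi p / (6 * Psi p)) (- pd (X ix2) Psi p / (6 * Psi p))).
  - apply Rdiv_lt_0_compat; [exact Heps | now apply Rabs_pos_lt].
  - intros w Hw.
    pose proof (Psi_line p eps Heps Hbox _ (y2_near_of_ratio_near p eps w Hy1 Hw)) as Hline.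
    replace (p (Y ix1) * w / p (Y ix1)) with w in Hline by (field; exact Hy1).
    apply (Rmult_eq_reg_l (6 * p (Y ix1) * Psi p));
      [| apply Rmult_integral_contrapositive_currified;
         [apply Rmult_integral_contrapositive_currified; [lra | exact Hy1] | exact HPsi]].
    transitivity (- (p (Y ix1) * pd (X ix1) Psi p + p (Y ix1) * w * pd (X ix2) Psi p));
      [rewrite Hline; ring | field; exact HPsi]. }
unfold Psi; rewrite Hf''0; ring.
Qed.

Lemma second_derivative_zero_near p : U p ->
  exists eta, 0 < eta /\ forall w, Rabs (w - ratio p) < eta -> f'' w = 0.
Proof.
intros Hp; assert (Hy1 := HUy1 p Hp); destruct (HU p Hp) as [eps [Heps Hbox]].
exists (eps / Rabs (p (Y ix1)));
  split; [apply Rdiv_lt_0_compat; [exact Heps | now apply Rabs_pos_lt]|].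
intros w Hw.
assert (Hr : in_box p eps (upd p (Y ix2) (p (Y ix1) * w))) by
  (apply in_box_upd; [apply in_box_center, Heps | now apply y2_near_of_ratio_near]).
pose proof (Psi_y2_invariant p eps Hbox _ Hr) as Hinv.
rewrite upd_upd, upd_id, (Psi_zero p Hp) in Hinv.
unfold Psi, ratio in Hinv; rewrite upd_same, upd_other in Hinv by discriminate.
replace (p (Y ix1) * w / p (Y ix1)) with w in Hinv by (field; exact Hy1).
pose proof (E_pos _ (Hbox _ Hr)) as HEpos.
destruct (Req_dec (f'' w) 0) as [H0|Hne]; [exact H0|exfalso].
apply (Rmult_integral_contrapositive_currified _ _ (pow_nonzero _ 2 Hne)
  (pow_nonzero _ 3 (Rgt_not_eq _ _ HEpos))), Hinv.
Qed.

End Landsberg.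

(** * Affine f gives vanishing Berwald curvature *)

Definition quad_y (A B C : R) (r : Point) : R :=
  A * r (Y ix1) * r (Y ix1) + B * r (Y ix1) * r (Y ix2) + C * r (Y ix2) * r (Y ix2).

Definition lin_y (A B : R) (r : Point) : R := A * r (Y ix1) + B * r (Y ix2).

Ltac pd_poly := apply functional_extensionality; intros r; apply is_pd_unique;
  eapply is_pd_eq; [repeat pd_rule | cbv beta; ring].

Lemma pd_quad_y k A B C : pd (Y k) (quad_y A B C) =
  match k with ix1 => lin_y (2 * A) B | ix2 => lin_y B (2 * C) end.
Proof. destruct k; unfold quad_y, lin_y; pd_poly. Qed.

Lemma pd_lin_y k A B : pd (Y k) (lin_y A B) = fun _ => match k with ix1 => A | ix2 => B end.
Proof. destruct k; unfold lin_y; pd_poly. Qed.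

Lemma pd_const c K : pd c (fun _ : Point => K) = fun _ => 0.
Proof. apply functional_extensionality; intros r; apply is_pd_unique, is_pd_const. Qed.

Lemma pds_quad_y i j k A B C r : pds [Y i; Y j; Y k] (quad_y A B C) r = 0.
Proof. cbn; rewrite pd_quad_y; destruct k; now rewrite pd_lin_y, pd_const. Qed.

Section Berwald.
Variables (f : R -> R) (u0 eta : R).

Definition ratio_near (r : Point) : Prop := y1_nonzero r /\ Rabs (ratio r - u0) < eta.

Lemma axis_open_ratio_near : axis_open ratio_near.
Proof.
intros r [Hr1 Hr2] [i|[|]]; unfold ratio, y1_nonzero in *.
- exists 1; split; [lra|]; intros t _; unfold ratio_near, ratio, y1_nonzero.
  now rewrite !upd_other.
- assert (Hcont : continuity_pt (fun t => r (Y ix2) / t) (r (Y ix1))).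
  { apply continuity_pt_div; [|apply continuity_pt_id | exact Hr1].
    apply continuity_pt_const; now intros ? ?. }
  destruct (axis_open_y1_nonzero r Hr1 (Y ix1)) as [d1 [Hd1 Hnz]].
  destruct (continuity_pt_near _ _ u0 eta Hcont Hr2) as [d2 [Hd2 Hnear]].
  exists (Rmin d1 d2); split; [now apply Rmin_pos|]; intros t Ht.
  split; [apply Hnz; eapply Rlt_le_trans; [exact Ht | apply Rmin_l]|].
  unfold ratio; rewrite upd_same, upd_other by discriminate.
  apply Hnear; eapply Rlt_le_trans; [exact Ht | apply Rmin_r].
- assert (Hcont : continuity_pt (fun t => t / r (Y ix1)) (r (Y ix2))).
  { apply continuity_pt_div; [apply continuity_pt_id | | exact Hr1].
    apply continuity_pt_const; now intros ? ?. }
  destruct (continuity_pt_near _ _ u0 eta Hcont Hr2) as [d [Hd Hnear]].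
  exists d; split; [exact Hd|]; intros t Ht; unfold ratio_near, ratio, y1_nonzero.
  rewrite upd_same, upd_other by discriminate; auto.
Qed.

Variables (alpha beta : R).
Hypothesis Haffine : forall w, Rabs (w - u0) < eta -> f w = alpha + beta * w.

Lemma berwald_zero_of_affine p i j k l : ratio_near p -> berwald f i j k l p = 0.
Proof.
intros Hp; unfold berwald.
enough (Hquad : pds [Y i; Y j; Y k] (spray f l) p = 0) by (rewrite Hquad; ring).
destruct l; [ rewrite (pds_ext_loc ratio_near _ (quad_y alpha beta 0))
            | rewrite (pds_ext_loc ratio_near _ (quad_y 0 alpha beta)) ];
  auto using axis_open_ratio_near, pds_quad_y;
  intros r [Hr1 Hr2]; unfold spray, quad_y; rewrite Haffine by exact Hr2;
  unfold ratio, y1_nonzero in *; field; exact Hr1.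
Qed.

End Berwald.

Theorem mainTheorem14 (f : R -> R) :
  real_analytic f ->
  (exists t, f t <> 0) ->
  ~ (exists (U : Point -> Prop) (E : Point -> R),
       open_pts U /\
       (forall p, U p -> p (Y ix1) <> 0) /\
       (exists p i j k l, U p /\ berwald f i j k l p <> 0) /\
       smooth_on U E /\
       (forall p, U p ->
          cond_H E p /\ cond_EL f E p /\ cond_Ls f E p /\ posdef_g E p)).
Proof.
intros Hf _ [U [E [HU [HUy1 [[p [i [j [k [l [Hp Hberwald]]]]]] [HE Hcond]]]]]].
destruct (locally_pseries_derive f (real_analytic_locally_pseries f Hf)) as [Df S1].
destruct (locally_pseries_derive _ S1) as [Df' S2].
destruct (locally_pseries_derive _ S2) as [Df'' _].
destruct (second_derivative_zero_near f _ _ _ Df Df' Df'' U E HU HUy1 HE Hcond p Hp)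
  as [eta [Heta Hzero]].
apply Hberwald, (berwald_zero_of_affine f (ratio p) (eta / 4)
  (f (ratio p) - Derive f (ratio p) * ratio p) (Derive f (ratio p))).
- intros w Hw.
  rewrite (affine_of_second_derive_zero f _ _ Df Df' (ratio p) eta Heta Hzero w) by lra; ring.
- split; [exact (HUy1 p Hp) | rewrite Rminus_eq_0, Rabs_R0; lra].
Qed.
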